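(* Fix $D,\alpha,\theta>0$. There is a constant $C=C(D,\alpha,\theta)$ such that for every finite connected graph $G$ on $n$ vertices satisfying (bal), (mix), (esc) with parameters $D,\alpha,\theta$, with $n$ sufficiently large, the following holds. Let $Y,Z$ be two independent lazy random walks of length $r-1$ started from two independent $\pi$-distributed vertices. Then, viewing $Y,Z$ as their vertex sets, $$\mathbb E\left[\mathrm{Close}_r(Y,Z)\right]\le C q^4,\qquad q=r/\sqrt n.$$
   Context: For a finite connected graph $G=(V,E)$ with $n$ vertices, $d(v)$ is the degree of $v$, $\delta(G),\Delta(G)$ are the minimum and maximum degrees. The lazy random walk $(X_t)$ on $G$ at each step stays put with probability $1/2$ and otherwise moves along a uniformly chosen edge incident to the current vertex; $\Pr_\mu$ denotes its law with $X_0\sim\mu$. Write $\mathbf p^t(u,v)=\Pr_u(X_t=v)$ and $\pi(v)=d(v)/(2|E|)$. The uniform mixing time is $t_{\mathrm{mix}}(G)=\min\{t\ge0:\max_{u,v\in V}|\mathbf p^t(u,v)/\pi(v)-1|\le 1/2\}$, and the bubble sum is $\mathcal B(G)=\sum_{t=0}^{t_{\mathrm{mix}}(G)}(t+1)\sup_{v}\mathbf p^t(v,v)$. Assumptions with parameters $D,\alpha,\theta>0$: (bal) $\Delta(G)/\delta(G)\le D$; (mix) $t_{\mathrm{mix}}(G)\le n^{1/2-\alpha}$; (esc) $\mathcal B(G)\le\theta$. The run time is $r=n^{1/2-\alpha/3}$ (rounded to an integer). For nonempty $U\subseteq V$, $\tau_U=\min\{t\ge 0:X_t\in U\}$. The $r$-closeness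 of two vertex sets is $\mathrm{Close}_r(U_1,U_2)=\Pr_\pi(\tau_{U_1}<r\text{ and }\tau_{U_2}<r)$, where the probability is over a lazy random walk $X$ with $X_0\sim\pi$ independent of $U_1,U_2$. *)

From Stdlib Require Import Reals Lra List Arith.
Import ListNotations.
Open Scope R_scope.

(* A finite multigraph on vertex set {0,...,n-1}, given by an edge-multiplicity
   function m : nat -> nat -> nat (only entries < n matter); symmetric, loopless. *)
Definition is_multigraph (n : nat) (m : nat -> nat -> nat) : Prop :=
  (forall u v, m u v = m v u) /\ (forall v, m v v = 0%nat).

Inductive reach (n : nat) (m : nat -> nat -> nat) (u : nat) : nat -> Prop :=
| reach_refl : reach n m u u
| reach_step : forall v w, reach n m u v -> (w < n)%nat -> (0 < m v w)%nat ->
               reach n m u w.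

Definition connected (n : nat) (m : nat -> nat -> nat) : Prop :=
  forall u v, (u < n)%nat -> (v < n)%nat -> reach n m u v.

Definition rsum (n : nat) (f : nat -> R) : R :=
  fold_right Rplus 0 (map f (seq 0 n)).

Definition deg (n : nat) (m : nat -> nat -> nat) (v : nat) : nat :=
  fold_right Nat.add 0%nat (map (m v) (seq 0 n)).

Definition maxdeg (n : nat) (m : nat -> nat -> nat) : nat :=
  fold_right Nat.max 0%nat (map (deg n m) (seq 0 n)).

Definition mindeg (n : nat) (m : nat -> nat -> nat) : nat :=
  fold_right Nat.min (deg n m 0) (map (deg n m) (seq 0 n)).

Definition totdeg (n : nat) (m : nat -> nat -> nat) : R :=
  rsum n (fun v => INR (deg n m v)).

Definition pi (n : nat) (m : nat -> nat -> nat) (v : nat) : R :=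
  INR (deg n m v) / totdeg n m.

Definition P (n : nat) (m : nat -> nat -> nat) (u v : nat) : R :=
  (if Nat.eqb u v then 1/2 else 0) + INR (m u v) / (2 * INR (deg n m u)).

Fixpoint pt (n : nat) (m : nat -> nat -> nat) (t : nat) (u v : nat) : R :=
  match t with
  | O => if Nat.eqb u v then 1 else 0
  | S t' => rsum n (fun w => pt n m t' u w * P n m w v)
  end.

Definition uniform_mixed (n : nat) (m : nat -> nat -> nat) (t : nat) : Prop :=
  forall u v, (u < n)%nat -> (v < n)%nat ->
    Rabs (pt n m t u v / pi n m v - 1) <= 1/2.

Definition is_tmix (n : nat) (m : nat -> nat -> nat) (t : nat) : Prop :=
  uniform_mixed n m t /\ (forall s, (s < t)%nat -> ~ uniform_mixed n m s).

Definition maxdiag (n : nat) (m : nat -> nat -> nat) (t : nat) : R :=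
  fold_right Rmax 0 (map (fun v => pt n m t v v) (seq 0 n)).

Definition bubble (n : nat) (m : nat -> nat -> nat) (tm : nat) : R :=
  rsum (S tm) (fun t => INR (S t) * maxdiag n m t).

(* Given the current last vertex and the reversed path so far, extend by k
   lazy-walk steps and integrate F against the resulting path. *)
Fixpoint ext_sum (n : nat) (m : nat -> nat -> nat) (k : nat) (last : nat)
    (acc : list nat) (F : list nat -> R) : R :=
  match k with
  | O => F (rev acc)
  | S k' => rsum n (fun v => P n m last v * ext_sum n m k' v (v :: acc) F)
  end.

(* E[F(X_0,...,X_{len-1})] for a lazy random walk X with X_0 ~ pi
   (a walk of length len-1, i.e. len time points). *)
Definition walk_exp (n : nat) (m : nat -> nat -> nat) (len : nat)
    (F : list nat -> R) : R :=
  rsum n (fun v => pi n m v * ext_sum n m (len - 1) v [v] F).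

Definition hits (x U : list nat) : bool :=
  existsb (fun v => existsb (Nat.eqb v) U) x.

Definition close_r (n : nat) (m : nat -> nat -> nat) (r : nat) (U1 U2 : list nat) : R :=
  walk_exp n m r (fun x => if andb (hits x U1) (hits x U2) then 1 else 0).

Definition expected_close (n : nat) (m : nat -> nat -> nat) (r : nat) : R :=
  walk_exp n m r (fun y => walk_exp n m r (fun z => close_r n m r y z)).

(* Let X be the π-started walk inside Close_r. If X hits both Y and Z, then
   there are coincidences X_s = Y_i and X_t = Z_j with s, i, t, j < r, so
   Close_r(Y,Z) is at most the X-expectation of the product of the numbers of
   such coincidences. Averaging over Z, each of whose positions is
   π-distributed, a coincidence X_t = Z_j costs at most max π, and likewise
   for Y; by (bal), max π <= D/n. Hence E[Close_r(Y,Z)] <= r^4 (D/n)^2 = D^2 q^4. *)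

From Stdlib Require Import Reals Lra Lia List Arith.
Import ListNotations.
Open Scope R_scope.

Lemma fold_right_Rplus_acc l a : fold_right Rplus a l = fold_right Rplus 0 l + a.
Proof. induction l as [|x l IH]; simpl; [ring | rewrite IH; ring]. Qed.

Lemma fold_right_add_acc l a : fold_right Nat.add a l = (fold_right Nat.add 0 l + a)%nat.
Proof. induction l as [|x l IH]; simpl; [lia | rewrite IH; lia]. Qed.

Lemma rsum_0 f : rsum 0 f = 0.
Proof. reflexivity. Qed.

Lemma rsum_S k f : rsum (S k) f = rsum k f + f k.
Proof.
  unfold rsum. rewrite seq_S, map_app, fold_right_app. simpl.
  rewrite fold_right_Rplus_acc. ring.
Qed.

Lemma rsum_ext k f g : (forall v, (v < k)%nat -> f v = g v) -> rsum k f = rsum k g.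
Proof.
  induction k as [|k IH]; intros E; [reflexivity|].
  rewrite !rsum_S, IH, E; [reflexivity | lia | intros; apply E; lia].
Qed.

Lemma rsum_le k f g : (forall v, (v < k)%nat -> f v <= g v) -> rsum k f <= rsum k g.
Proof.
  induction k as [|k IH]; intros H; [rewrite !rsum_0; lra|].
  rewrite !rsum_S. apply Rplus_le_compat; [apply IH; intros; apply H|apply H]; lia.
Qed.

Lemma rsum_nonneg k f : (forall v, (v < k)%nat -> 0 <= f v) -> 0 <= rsum k f.
Proof.
  intros H. replace 0 with (rsum k (fun _ => 0)).
  - apply rsum_le. exact H.
  - induction k as [|k IH]; [reflexivity|]. rewrite rsum_S, IH; [ring|auto].
Qed.

Lemma rsum_plus k f g : rsum k (fun v => f v + g v) = rsum k f + rsum k g.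
Proof. induction k as [|k IH]; [rewrite !rsum_0; ring|]. rewrite !rsum_S, IH. ring. Qed.

Lemma rsum_scal_l k c f : rsum k (fun v => c * f v) = c * rsum k f.
Proof. induction k as [|k IH]; [rewrite !rsum_0; ring|]. rewrite !rsum_S, IH. ring. Qed.

Lemma rsum_scal_r k c f : rsum k (fun v => f v * c) = rsum k f * c.
Proof. induction k as [|k IH]; [rewrite !rsum_0; ring|]. rewrite !rsum_S, IH. ring. Qed.

Lemma rsum_const k c : rsum k (fun _ => c) = INR k * c.
Proof. induction k as [|k IH]; [rewrite rsum_0; simpl; ring|]. rewrite rsum_S, IH, S_INR. ring. Qed.

Lemma rsum_le_const k f c : (forall v, (v < k)%nat -> f v <= c) -> rsum k f <= INR k * c.
Proof. intros H. rewrite <- rsum_const. apply rsum_le. exact H. Qed.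

Lemma rsum_swap k j f :
  rsum k (fun a => rsum j (fun b => f a b)) = rsum j (fun b => rsum k (fun a => f a b)).
Proof.
  induction k as [|k IH].
  - rewrite rsum_0, (rsum_ext j _ (fun _ => 0)), rsum_const by reflexivity. ring.
  - rewrite rsum_S, IH, <- rsum_plus. apply rsum_ext. intros. rewrite rsum_S. reflexivity.
Qed.

Lemma rsum_term_le k f s :
  (s < k)%nat -> (forall v, (v < k)%nat -> 0 <= f v) -> f s <= rsum k f.
Proof.
  induction k as [|k IH]; intros Hs H; [lia|]. rewrite rsum_S.
  destruct (Nat.eq_dec s k) as [->|Hne].
  - assert (0 <= rsum k f) by (apply rsum_nonneg; intros; apply H; lia). lra.
  - assert (f s <= rsum k f) by (apply IH; [lia | intros; apply H; lia]).
    assert (0 <= f k) by (apply H; lia). lra.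
Qed.

Lemma rsum_delta k u f :
  (u < k)%nat -> rsum k (fun v => if Nat.eqb u v then f v else 0) = f u.
Proof.
  induction k as [|k IH]; intros Hu; [lia|]. rewrite rsum_S.
  destruct (Nat.eq_dec u k) as [->|Hne].
  - rewrite Nat.eqb_refl, (rsum_ext k _ (fun _ => 0)), rsum_const; [ring|].
    intros v Hv. destruct (Nat.eqb_spec k v); [lia|reflexivity].
  - rewrite IH by lia. destruct (Nat.eqb_spec u k); [lia|ring].
Qed.

Definition kron (a b : nat) : R := if Nat.eqb a b then 1 else 0.

Lemma kron_nonneg a b : 0 <= kron a b.
Proof. unfold kron. destruct (Nat.eqb a b); lra. Qed.

Lemma rsum_kron_le1 k u : rsum k (kron u) <= 1.
Proof.
  destruct (Nat.lt_ge_cases u k) as [Hu|Hu].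
  - unfold kron. rewrite (rsum_delta k u (fun _ => 1)) by exact Hu. lra.
  - rewrite (rsum_ext k _ (fun _ => 0)), rsum_const; [lra|].
    intros v Hv. unfold kron. destruct (Nat.eqb_spec u v); [lia|reflexivity].
Qed.

Lemma Rdiv_nonneg a b : 0 <= a -> 0 <= b -> 0 <= a / b.
Proof.
  intros Ha Hb. destruct (Req_dec b 0) as [->|Hb0].
  - unfold Rdiv. rewrite Rinv_0. lra.
  - apply Rmult_le_pos; [exact Ha | left; apply Rinv_0_lt_compat; lra].
Qed.

Section LazyWalk.

Variable n : nat.
Variable m : nat -> nat -> nat.
Hypothesis m_sym : forall u v, m u v = m v u.
Hypothesis n_pos : (0 < n)%nat.
Hypothesis deg_pos : forall u, (u < n)%nat -> 0 < INR (deg n m u).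

Lemma INR_deg u : INR (deg n m u) = rsum n (fun v => INR (m u v)).
Proof.
  unfold deg, rsum. generalize n. intros k. induction k as [|k IH]; [reflexivity|].
  rewrite !seq_S, !map_app, !fold_right_app. simpl.
  rewrite fold_right_Rplus_acc, fold_right_add_acc, plus_INR, IH, Nat.add_0_r. ring.
Qed.

Lemma P_nonneg u v : 0 <= P n m u v.
Proof.
  unfold P. apply Rplus_le_le_0_compat.
  - destruct (Nat.eqb u v); lra.
  - apply Rdiv_nonneg; [apply pos_INR | pose proof (pos_INR (deg n m u)); lra].
Qed.

Lemma P_row_sum u : (u < n)%nat -> rsum n (P n m u) = 1.
Proof.
  intros Hu. unfold P. rewrite rsum_plus, (rsum_delta n u (fun _ => 1/2)) by exact Hu.
  unfold Rdiv at 2. rewrite rsum_scal_r, <- INR_deg.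
  pose proof (deg_pos u Hu). field. lra.
Qed.

Lemma totdeg_pos : 0 < totdeg n m.
Proof.
  eapply Rlt_le_trans; [apply (deg_pos 0); exact n_pos|].
  apply (rsum_term_le n (fun v => INR (deg n m v))); [exact n_pos | intros; apply pos_INR].
Qed.

Lemma pi_nonneg v : 0 <= pi n m v.
Proof. apply Rdiv_nonneg; [apply pos_INR | left; apply totdeg_pos]. Qed.

Lemma pi_sum : rsum n (pi n m) = 1.
Proof.
  pose proof totdeg_pos. unfold pi, Rdiv. rewrite rsum_scal_r.
  unfold totdeg in *. field. lra.
Qed.

Lemma pi_stationary v : (v < n)%nat -> rsum n (fun u => pi n m u * P n m u v) = pi n m v.
Proof.
  intros Hv. pose proof totdeg_pos.
  rewrite (rsum_ext n _ (fun u => (if Nat.eqb v u then pi n m u * (1/2) else 0)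
                                  + INR (m v u) * / (2 * totdeg n m))).
  - rewrite rsum_plus, rsum_delta, rsum_scal_r, <- INR_deg by exact Hv.
    unfold pi. field. lra.
  - intros u Hu. pose proof (deg_pos u Hu). unfold P, pi. rewrite (m_sym u v), Nat.eqb_sym.
    destruct (Nat.eqb v u); field; lra.
Qed.

Definition transition (h : nat -> R) (u : nat) : R := rsum n (fun v => P n m u v * h v).

Lemma pi_transition h :
  rsum n (fun u => pi n m u * transition h u) = rsum n (fun v => pi n m v * h v).
Proof.
  unfold transition.
  transitivity (rsum n (fun u => rsum n (fun v => pi n m u * P n m u v * h v))).
  - apply rsum_ext. intros. rewrite <- rsum_scal_l. apply rsum_ext. intros. ring.
  - rewrite rsum_swap. apply rsum_ext. intros v Hv. rewrite rsum_scal_r, pi_stationary by exact Hv.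
    reflexivity.
Qed.

Lemma pi_iter_transition j h :
  rsum n (fun u => pi n m u * Nat.iter j transition h u) = rsum n (fun v => pi n m v * h v).
Proof. induction j as [|j IH]; [reflexivity|]. simpl. rewrite pi_transition. exact IH. Qed.

Lemma ext_sum_mono k last acc F G :
  (forall l, length l = k -> F (rev acc ++ l) <= G (rev acc ++ l)) ->
  ext_sum n m k last acc F <= ext_sum n m k last acc G.
Proof.
  revert last acc. induction k as [|k IH]; intros last acc H; simpl.
  - rewrite <- (app_nil_r (rev acc)). apply H. reflexivity.
  - apply rsum_le. intros v _. apply Rmult_le_compat_l; [apply P_nonneg|].
    apply IH. intros l Hl. simpl rev. rewrite <- app_assoc. apply H. simpl. lia.
Qed.

Lemma ext_sum_const k last acc F c :
  (last < n)%nat -> (forall l, length l = k -> F (rev acc ++ l) = c) ->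
  ext_sum n m k last acc F = c.
Proof.
  revert last acc. induction k as [|k IH]; intros last acc Hlast H; simpl.
  - rewrite <- (app_nil_r (rev acc)). apply H. reflexivity.
  - rewrite (rsum_ext n _ (fun v => P n m last v * c)).
    + rewrite rsum_scal_r, P_row_sum by exact Hlast. ring.
    + intros v Hv. rewrite (IH v); [reflexivity | exact Hv |].
      intros l Hl. simpl rev. rewrite <- app_assoc. apply H. simpl. lia.
Qed.

Lemma ext_sum_rsum k last acc N f :
  ext_sum n m k last acc (fun x => rsum N (fun s => f s x)) =
  rsum N (fun s => ext_sum n m k last acc (f s)).
Proof.
  revert last acc. induction k as [|k IH]; intros last acc; simpl; [reflexivity|].
  rewrite <- rsum_swap. apply rsum_ext. intros. rewrite IH, rsum_scal_l. reflexivity.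
Qed.

Lemma ext_sum_scal k last acc c F :
  ext_sum n m k last acc (fun x => c * F x) = c * ext_sum n m k last acc F.
Proof.
  revert last acc. induction k as [|k IH]; intros last acc; simpl; [reflexivity|].
  rewrite <- rsum_scal_l. apply rsum_ext. intros. rewrite IH. ring.
Qed.

Lemma ext_sum_nth k last acc g j :
  (j < k)%nat ->
  ext_sum n m k last acc (fun x => g (nth (length acc + j) x 0%nat)) =
  Nat.iter (S j) transition g last.
Proof.
  revert last acc j. induction k as [|k IH]; intros last acc j Hj; [lia|].
  simpl ext_sum. apply rsum_ext. intros v Hv. f_equal. destruct j as [|j].
  - apply ext_sum_const; [exact Hv|]. intros l _. simpl rev. rewrite <- app_assoc.
    rewrite Nat.add_0_r, app_nth2, length_rev, Nat.sub_diag by (rewrite length_rev; lia).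
    reflexivity.
  - replace (length acc + S j)%nat with (length (v :: acc) + j)%nat by (simpl; lia).
    apply IH. lia.
Qed.

Lemma walk_exp_mono len F G :
  (1 <= len)%nat -> (forall l, length l = len -> F l <= G l) ->
  walk_exp n m len F <= walk_exp n m len G.
Proof.
  intros Hlen H. apply rsum_le. intros v _. apply Rmult_le_compat_l; [apply pi_nonneg|].
  apply ext_sum_mono. intros l Hl. apply H. simpl. lia.
Qed.

Lemma walk_exp_ext len F G : (forall l, F l = G l) -> walk_exp n m len F = walk_exp n m len G.
Proof.
  intros E. apply rsum_ext. intros. f_equal.
  apply Rle_antisym; apply ext_sum_mono; intros; rewrite E; apply Rle_refl.
Qed.

Lemma walk_exp_rsum len N f :
  walk_exp n m len (fun x => rsum N (fun s => f s x)) = rsum N (fun s => walk_exp n m len (f s)).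
Proof.
  unfold walk_exp. rewrite <- rsum_swap. apply rsum_ext. intros.
  rewrite ext_sum_rsum, rsum_scal_l. reflexivity.
Qed.

Lemma walk_exp_scal len c F : walk_exp n m len (fun x => c * F x) = c * walk_exp n m len F.
Proof.
  unfold walk_exp. rewrite <- rsum_scal_l. apply rsum_ext. intros.
  rewrite ext_sum_scal. ring.
Qed.

Lemma walk_exp_one len : walk_exp n m len (fun _ => 1) = 1.
Proof.
  unfold walk_exp. rewrite (rsum_ext n _ (pi n m)), pi_sum; [reflexivity|].
  intros v Hv. rewrite (ext_sum_const _ _ _ _ 1) by auto. ring.
Qed.

Lemma walk_exp_nth len g i :
  (i < len)%nat -> walk_exp n m len (fun y => g (nth i y 0%nat)) = rsum n (fun v => pi n m v * g v).
Proof.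
  intros Hi. unfold walk_exp. destruct i as [|i].
  - apply rsum_ext. intros v Hv. f_equal. apply ext_sum_const; [exact Hv | reflexivity].
  - rewrite <- (pi_iter_transition (S i) g). apply rsum_ext. intros v _. f_equal.
    apply (ext_sum_nth (len - 1) v [v] g i). lia.
Qed.

Variable r : nat.
Hypothesis r_pos : (1 <= r)%nat.
Variable p : R.
Hypothesis pi_le : forall v, (v < n)%nat -> pi n m v <= p.

Lemma p_nonneg : 0 <= p.
Proof. eapply Rle_trans; [apply (pi_nonneg 0) | apply pi_le; exact n_pos]. Qed.

Definition visits (x y : list nat) : R :=
  rsum r (fun s => rsum r (fun i => kron (nth s x 0%nat) (nth i y 0%nat))).

Lemma visits_nonneg x y : 0 <= visits x y.
Proof. do 2 (apply rsum_nonneg; intros). apply kron_nonneg. Qed.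

Lemma hits_visits x y :
  length x = r -> length y = r -> hits x y = true -> 1 <= visits x y.
Proof.
  intros Hx Hy H. unfold hits in H.
  apply existsb_exists in H as [v [Hv H]]. apply existsb_exists in H as [w [Hw E]].
  apply Nat.eqb_eq in E. subst w.
  apply (In_nth _ _ 0%nat) in Hv as [s [Hs Es]]. apply (In_nth _ _ 0%nat) in Hw as [i [Hi Ei]].
  unfold visits. eapply Rle_trans; [|apply (rsum_term_le r _ s)].
  - eapply Rle_trans; [|apply (rsum_term_le r _ i)].
    + unfold kron. rewrite Es, Ei, Nat.eqb_refl. lra.
    + lia.
    + intros. apply kron_nonneg.
  - lia.
  - intros. apply rsum_nonneg. intros. apply kron_nonneg.
Qed.

Lemma hits_both_le x y z :
  length x = r -> length y = r -> length z = r ->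
  (if andb (hits x y) (hits x z) then 1 else 0) <= visits x y * visits x z.
Proof.
  intros Hx Hy Hz. pose proof (visits_nonneg x y). pose proof (visits_nonneg x z).
  destruct (hits x y) eqn:Ey; destruct (hits x z) eqn:Ez; simpl;
    try (apply Rmult_le_pos; assumption).
  pose proof (hits_visits x y Hx Hy Ey). pose proof (hits_visits x z Hx Hz Ez). nra.
Qed.

Lemma pi_kron_le c : rsum n (fun b => pi n m b * kron c b) <= p.
Proof.
  apply Rle_trans with (rsum n (fun b => p * kron c b)).
  - apply rsum_le. intros b Hb.
    apply Rmult_le_compat_r; [apply kron_nonneg | apply pi_le; exact Hb].
  - rewrite rsum_scal_l. pose proof (rsum_kron_le1 n c). pose proof p_nonneg. nra.
Qed.

(* Averaging over an independent walk z, each of the r^2 coincidences with z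
   has probability at most p. *)
Lemma walk_exp_visits_le F :
  (forall x, 0 <= F x) ->
  walk_exp n m r (fun z => walk_exp n m r (fun x => F x * visits x z)) <=
  INR r * (INR r * (p * walk_exp n m r F)).
Proof.
  intros HF.
  rewrite (walk_exp_ext r _ (fun z => rsum r (fun t => rsum r (fun j =>
             walk_exp n m r (fun x => F x * kron (nth t x 0%nat) (nth j z 0%nat)))))).
  2:{ intros z.
      rewrite (rsum_ext r _ (fun t => walk_exp n m r (fun x =>
                 rsum r (fun j => F x * kron (nth t x 0%nat) (nth j z 0%nat)))))
        by (intros; rewrite walk_exp_rsum; reflexivity).
      rewrite <- walk_exp_rsum. apply walk_exp_ext. intros x.
      unfold visits. rewrite <- rsum_scal_l. apply rsum_ext. intros.
      rewrite <- rsum_scal_l. reflexivity. }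
  rewrite walk_exp_rsum. apply rsum_le_const. intros t _.
  rewrite walk_exp_rsum. apply rsum_le_const. intros j Hj.
  rewrite (walk_exp_nth r (fun b => walk_exp n m r (fun x => F x * kron (nth t x 0%nat) b)) j Hj).
  rewrite (rsum_ext n _ (fun b =>
             walk_exp n m r (fun x => pi n m b * (F x * kron (nth t x 0%nat) b))))
    by (intros; rewrite walk_exp_scal; reflexivity).
  rewrite <- walk_exp_rsum, <- walk_exp_scal. apply walk_exp_mono; [exact r_pos|].
  intros x _. rewrite (rsum_ext n _ (fun b => F x * (pi n m b * kron (nth t x 0%nat) b)))
    by (intros; ring).
  rewrite rsum_scal_l. pose proof (pi_kron_le (nth t x 0%nat)). pose proof (HF x). nra.
Qed.

Lemma expected_close_le : expected_close n m r <= INR r ^ 4 * p ^ 2.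
Proof.
  unfold expected_close, close_r.
  apply Rle_trans with
    (walk_exp n m r (fun y => walk_exp n m r (fun z =>
       walk_exp n m r (fun x => visits x y * visits x z)))).
  { do 3 (apply walk_exp_mono; [exact r_pos | intros]). apply hits_both_le; assumption. }
  apply Rle_trans with
    (walk_exp n m r (fun y => INR r * (INR r * p) * walk_exp n m r (fun x => 1 * visits x y))).
  { apply walk_exp_mono; [exact r_pos|]. intros y _.
    eapply Rle_trans; [apply walk_exp_visits_le; intros; apply visits_nonneg|].
    right. rewrite (walk_exp_ext r (fun x => 1 * visits x y) (fun x => visits x y))
      by (intros; ring).
    ring. }
  rewrite walk_exp_scal.
  pose proof p_nonneg. pose proof (pos_INR r).
  eapply Rle_trans.
  - apply Rmult_le_compat_l; [apply Rmult_le_pos; [|apply Rmult_le_pos]; assumption|].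
    apply walk_exp_visits_le. intros. lra.
  - rewrite walk_exp_one. right. ring.
Qed.

End LazyWalk.

Lemma reach_lt n m u w : reach n m u w -> (u < n)%nat -> (w < n)%nat.
Proof. induction 1; auto. Qed.

Lemma reach_last_edge n m u w :
  reach n m u w -> (u < n)%nat -> u <> w -> exists v, (v < n)%nat /\ (0 < m v w)%nat.
Proof.
  intros H Hu Hne. destruct H as [|v w Hreach _ Hvw]; [congruence|].
  exists v. split; [exact (reach_lt n m u v Hreach Hu) | exact Hvw].
Qed.

Lemma deg_pos_connected n m :
  (2 <= n)%nat -> (forall u v, m u v = m v u) -> connected n m ->
  forall w, (w < n)%nat -> 0 < INR (deg n m w).
Proof.
  intros Hn Hsym Hconn w Hw.
  set (u := if Nat.eqb w 0 then 1%nat else 0%nat).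
  assert (Hu : (u < n)%nat /\ u <> w) by (unfold u; destruct (Nat.eqb_spec w 0); lia).
  destruct Hu as [Hu Huw].
  destruct (reach_last_edge n m u w (Hconn u w Hu Hw) Hu Huw) as [v [Hv Hvw]].
  rewrite INR_deg. eapply Rlt_le_trans; [|apply (rsum_term_le n (fun x => INR (m w x)) v)].
  - rewrite Hsym. apply lt_0_INR. exact Hvw.
  - exact Hv.
  - intros. apply pos_INR.
Qed.

Lemma fold_right_min_le l a x : In x l -> (fold_right Nat.min a l <= x)%nat.
Proof.
  induction l as [|y l IH]; simpl; [tauto|].
  intros [->|Hx]; [lia|]. specialize (IH Hx). lia.
Qed.

Lemma fold_right_min_cases l a : fold_right Nat.min a l = a \/ In (fold_right Nat.min a l) l.
Proof.
  induction l as [|y l IH]; simpl; [auto|].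
  destruct (Nat.min_spec y (fold_right Nat.min a l)) as [[_ ->]|[_ ->]]; tauto.
Qed.

Lemma deg_le_maxdeg n m v : (v < n)%nat -> (deg n m v <= maxdeg n m)%nat.
Proof.
  intros Hv. assert (H := proj1 (list_max_le (map (deg n m) (seq 0 n)) _) (le_n _)).
  rewrite Forall_forall in H. apply H, in_map, in_seq. lia.
Qed.

Lemma mindeg_le_deg n m v : (v < n)%nat -> (mindeg n m <= deg n m v)%nat.
Proof. intros Hv. apply fold_right_min_le, in_map, in_seq. lia. Qed.

Lemma mindeg_pos n m :
  (0 < n)%nat -> (forall u, (u < n)%nat -> 0 < INR (deg n m u)) -> 1 <= INR (mindeg n m).
Proof.
  intros Hn Hdeg. apply (le_INR 1).
  assert (Hd0 : (0 < deg n m 0)%nat) by (apply INR_lt; apply Hdeg, Hn).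
  unfold mindeg. destruct (fold_right_min_cases (map (deg n m) (seq 0 n)) (deg n m 0)) as [->|Hin].
  - simpl in Hd0. lia.
  - apply in_map_iff in Hin as [v [<- Hv]]. apply in_seq in Hv.
    assert (0 < deg n m v)%nat by (apply INR_lt; apply Hdeg; lia). lia.
Qed.

Lemma pi_le_balanced n m D :
  (0 < n)%nat -> (forall u, (u < n)%nat -> 0 < INR (deg n m u)) ->
  INR (maxdeg n m) / INR (mindeg n m) <= D ->
  forall v, (v < n)%nat -> pi n m v <= D / INR n.
Proof.
  intros Hn Hdeg Hbal v Hv.
  pose proof (mindeg_pos n m Hn Hdeg) as Hmin.
  pose proof (lt_0_INR n Hn) as HnR.
  assert (Hmax : INR (maxdeg n m) <= D * INR (mindeg n m)).
  { apply (Rmult_le_compat_r (INR (mindeg n m))) in Hbal; [|lra].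
    unfold Rdiv in Hbal. rewrite Rmult_assoc, Rinv_l in Hbal by lra. lra. }
  assert (Htot : INR n * INR (mindeg n m) <= totdeg n m).
  { unfold totdeg. rewrite <- rsum_const. apply rsum_le. intros u Hu.
    apply le_INR, mindeg_le_deg, Hu. }
  pose proof (le_INR _ _ (deg_le_maxdeg n m v Hv)).
  pose proof (pos_INR (deg n m v)).
  assert (0 <= D) by nra.
  assert (Hdv : INR (deg n m v) * INR n <= D * totdeg n m) by nra.
  assert (0 < totdeg n m) by nra.
  unfold pi. apply (Rmult_le_reg_r (totdeg n m * INR n)); [nra|].
  replace (INR (deg n m v) / totdeg n m * (totdeg n m * INR n)) with (INR (deg n m v) * INR n)
    by (field; lra).
  replace (D / INR n * (totdeg n m * INR n)) with (D * totdeg n m) by (field; lra).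
  exact Hdv.
Qed.

Lemma uniform_mixed_pos n m t : (2 <= n)%nat -> uniform_mixed n m t -> (1 <= t)%nat.
Proof.
  intros Hn Hmix. destruct t as [|t]; [|lia].
  specialize (Hmix 0%nat 1%nat ltac:(lia) ltac:(lia)). simpl in Hmix.
  replace (0 / pi n m 1 - 1) with (-1) in Hmix by (unfold Rdiv; ring).
  rewrite Rabs_left in Hmix; lra.
Qed.

(* This is what excludes r = 0, where [walk_exp n m 0] still averages over
   one-point paths (since 0 - 1 = 0) and E[Close_0] need not vanish. *)
Lemma run_length_pos n m tm r alpha :
  (2 <= n)%nat -> 0 < alpha -> uniform_mixed n m tm ->
  INR tm <= Rpower (INR n) (1/2 - alpha) ->
  Rpower (INR n) (1/2 - alpha/3) < INR r + 1 -> (1 <= r)%nat.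
Proof.
  intros Hn Halpha Hmix Htm Hr.
  assert (1 <= INR tm) by (apply (le_INR 1), (uniform_mixed_pos n m); assumption).
  assert (Rpower (INR n) (1/2 - alpha) <= Rpower (INR n) (1/2 - alpha/3)).
  { apply Rle_Rpower; [apply (le_INR 1); lia | lra]. }
  destruct r; [simpl in Hr; lra | lia].
Qed.

Theorem mainTheorem8 :
  forall (D alpha theta : R), 0 < D -> 0 < alpha -> 0 < theta ->
  exists (C : R) (N : nat),
  forall (n : nat) (m : nat -> nat -> nat) (r : nat),
    (N <= n)%nat ->
    is_multigraph n m ->
    connected n m ->
    (* (bal) *)
    INR (maxdeg n m) / INR (mindeg n m) <= D ->
    (* (mix) and (esc) *)
    (exists tm, is_tmix n m tm /\
                INR tm <= Rpower (INR n) (1/2 - alpha) /\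
                bubble n m tm <= theta) ->
    (* r = n^(1/2 - alpha/3) rounded (down) to an integer *)
    INR r <= Rpower (INR n) (1/2 - alpha/3) < INR r + 1 ->
    expected_close n m r <= C * (INR r / sqrt (INR n)) ^ 4.
Proof.
  intros D alpha theta _ Halpha _. exists (D ^ 2), 2%nat.
  intros n m r Hn [Hsym _] Hconn Hbal [tm [[Hmix _] [Htm _]]] [_ Hr].
  assert (Hn0 : (0 < n)%nat) by lia.
  pose proof (deg_pos_connected n m Hn Hsym Hconn) as Hdeg.
  pose proof (run_length_pos n m tm r alpha Hn Halpha Hmix Htm Hr) as Hr1.
  eapply Rle_trans.
  { apply (expected_close_le n m Hsym Hn0 Hdeg r Hr1 (D / INR n)).
    apply pi_le_balanced; assumption. }
  assert (HnR : 0 < INR n) by (apply lt_0_INR; exact Hn0).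
  assert (Hsqrt : sqrt (INR n) * sqrt (INR n) = INR n) by (apply sqrt_sqrt; lra).
  assert (0 < sqrt (INR n)) by (apply sqrt_lt_R0; exact HnR).
  set (s := sqrt (INR n)) in *. right. rewrite <- Hsqrt. field. lra.
Qed.
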